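(* Consider noiseless non-adaptive sensing $\bm{y} = \bm{A}\bm{x}$, where $\bm{x} \in \mathbb{R}^N$ is an arbitrary one-sparse signal whose single nonzero entry equals $\mu \neq 0$, and $\bm{A}$ is a binary ($\{0,1\}$-valued) $M \times N$ sensing matrix with $M = T\log_2(N)$ measurements, where $T \geq 1$ is a constant. Then any such binary sensing matrix $\bm{A}$ from which every such one-sparse $\bm{x}$ can be reconstructed from $\bm{y} = \bm{A}\bm{x}$ has $l_0$ cost $\|\bm{A}\|_{0,0} = \Theta(N\log_2(N))$ as $N \to \infty$.
   Context: For an $M\times N$ matrix $\bm{A} = [A_1 \cdots A_N]$ with columns $A_i$, the $l_0$ cost is $\|\bm{A}\|_{0,0} = \sum_{i=1}^N \|A_i\|_0 = \sum_{i=1}^N\sum_{j=1}^M \mathbb{I}(A(j,i)\neq 0)$, the number of nonzero entries. A signal is one-sparse if it has at most one nonzero entry. A non-adaptive strategy acquires all $M$ measurements at once with a fixed matrix $\bm{A}$ not chosen based on previous observations. $F(N) = \Theta(g(N))$ means there are positive constants $C_1, C_2$ with $C_1 g(N) \leq F(N) \leq C_2 g(N)$ for all sufficiently large $N$. *)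

From HB Require Import structures.
From mathcomp Require Import all_boot all_order all_algebra.
From mathcomp Require Import all_classical all_reals all_analysis.
Set Implicit Arguments. Unset Strict Implicit. Unset Printing Implicit Defensive.
Import Order.TTheory GRing.Theory Num.Theory.
Local Open Scope ring_scope.

Definition log2 (R : realType) (x : R) : R := ln x / ln 2.

Definition l0_cost (R : realType) (m n : nat) (A : 'M[R]_(m, n)) : nat :=
  (\sum_(i < n) \sum_(j < m) nat_of_bool (A j i != 0%R))%N.

Definition binary_mx (R : realType) (m n : nat) (A : 'M[R]_(m, n)) : Prop :=
  forall j i, A j i = 0 \/ A j i = 1.

Definition one_sparse_with (R : realType) (n : nat) (mu : R) (x : 'cV[R]_n) : Prop :=
  exists i : 'I_n, x i 0 = mu /\ forall k : 'I_n, k != i -> x k 0 = 0.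

Definition recovers_one_sparse (R : realType) (m n : nat) (mu : R)
    (A : 'M[R]_(m, n)) : Prop :=
  forall x x' : 'cV[R]_n, one_sparse_with mu x -> one_sparse_with mu x' ->
    A *m x = A *m x' -> x = x'.

From mathcomp Require Import all_boot all_order all_algebra.
From mathcomp Require Import all_classical all_reals all_analysis.
From mathcomp Require Import ring lra.
Set Implicit Arguments. Unset Strict Implicit. Unset Printing Implicit Defensive.
Import Order.TTheory GRing.Theory Num.Theory.
Local Open Scope ring_scope.

(* The upper bound is the trivial [M N].  For the lower bound, recovery of
   one-sparse signals forces the N column supports to be pairwise distinct
   subsets of an M-set.  Summing [q ^ |support|] over distinct subsets gives
   at most [(1 + q)^M <= exp (q M)], while convexity of [exp] bounds the same
   sum below by [N q^(mean support size)].  Taking logarithms with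
   [q = ln 2 / (2 T)] and [M <= T log2 N + 1] makes the mean support size at
   least [ln N / (4 ln (1/q))], i.e. the cost is of order [N log2 N]. *)

Definition weight (M : nat) (v : {ffun 'I_M -> bool}) : nat := (\sum_j v j)%N.

Definition support_col (R : realType) (M N : nat) (A : 'M[R]_(M, N)) (i : 'I_N) :
  {ffun 'I_M -> bool} := [ffun j => A j i != 0].

Lemma l0_costE (R : realType) (M N : nat) (A : 'M[R]_(M, N)) :
  l0_cost A = (\sum_i weight (support_col A i))%N.
Proof.
by apply: eq_bigr => i _; apply: eq_bigr => j _; rewrite ffunE.
Qed.

Lemma l0_cost_le_mul (R : realType) (M N : nat) (A : 'M[R]_(M, N)) :
  (l0_cost A <= M * N)%N.
Proof.
rewrite /l0_cost mulnC -[X in (_ <= X * _)%N]card_ord -sum_nat_const.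
apply: leq_sum => i _; rewrite -[X in (_ <= X)%N]card_ord -sum1_card.
by apply: leq_sum => j _; exact: leq_b1.
Qed.

Lemma sum_expr_weight (R : comPzSemiRingType) (q : R) (M : nat) :
  \sum_(v : {ffun 'I_M -> bool}) q ^+ weight v = (1 + q) ^+ M.
Proof.
rewrite -[M in RHS]card_ord -prodr_const.
rewrite (eq_bigr (fun j : 'I_M => \sum_(b : bool) q ^+ b)); last first.
  by move=> j _; rewrite big_bool /= expr1 expr0 addrC.
by rewrite bigA_distr_bigA /=; apply: eq_bigr => v _; rewrite /weight expr_sum.
Qed.

Lemma sum_expr_weight_inj (R : numDomainType) (q : R) (M N : nat)
    (f : 'I_N -> {ffun 'I_M -> bool}) :
  0 <= q -> injective f -> \sum_i q ^+ weight (f i) <= (1 + q) ^+ M.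
Proof.
move=> q_ge0 f_inj; rewrite -sum_expr_weight.
have -> : \sum_i q ^+ weight (f i) = \sum_(v in f @: setT) q ^+ weight v.
  rewrite big_imset /=; last by move=> i k _ _ /f_inj.
  by apply: eq_bigl => i; rewrite in_setT.
rewrite [X in _ <= X](bigID (mem (f @: setT))) /= lerDl.
by apply: sumr_ge0 => v _; exact: exprn_ge0.
Qed.

Lemma expR_mean_le (R : realType) (N : nat) (w : 'I_N -> R) : (0 < N)%N ->
  N%:R * expR ((\sum_i w i) / N%:R) <= \sum_i expR (w i).
Proof.
move=> N_gt0; set m := _ / _.
have N_neq0 : (N%:R : R) != 0 by rewrite pnatr_eq0 -lt0n.
have tangent i : expR m * (1 + (w i - m)) <= expR (w i).
  by rewrite -{2}(subrK m (w i)) expRD mulrC ler_wpM2r ?expR_ge0 ?expR_ge1Dx.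
apply: le_trans (ler_sum _ (fun i _ => tangent i)).
rewrite -mulr_sumr big_split sumrB /= !sumr_const card_ord mulrC.
by rewrite -[m *+ N]mulr_natr /m divfK // subrr addr0.
Qed.

Lemma mean_weight_lower_bound (R : realType) (q : R) (M N : nat)
    (f : 'I_N -> {ffun 'I_M -> bool}) :
  0 < q -> injective f -> (0 < N)%N ->
  ln (N%:R : R) - M%:R * q <= - ln q * ((\sum_i weight (f i))%N%:R / N%:R).
Proof.
move=> q_gt0 f_inj N_gt0.
have N_gt0' : (0 : R) < N%:R by rewrite ltr0n.
have jensen := expR_mean_le (fun i => ln q * (weight (f i))%:R) N_gt0.
rewrite -mulr_sumr -natr_sum -mulrA in jensen.
have generating : \sum_i expR (ln q * (weight (f i))%:R) <= expR (M%:R * q).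
  under eq_bigr do rewrite mulrC expRM_natl lnK ?posrE //.
  apply: le_trans (sum_expr_weight_inj (ltW q_gt0) f_inj) _.
  rewrite expRM_natl; apply: lerXn2r; rewrite ?nnegrE ?expR_ge0 ?expR_ge1Dx //.
  by rewrite addr_ge0 ?ltW.
have := le_trans jensen generating.
rewrite -[X in X * _ <= _]lnK ?posrE // -expRD ler_expR mulNr.
lra.
Qed.

Lemma support_col_inj (R : realType) (M N : nat) (mu : R) (A : 'M[R]_(M, N)) :
  mu != 0 -> binary_mx A -> recovers_one_sparse mu A -> injective (support_col A).
Proof.
move=> mu_neq0 A_bin A_rec i k /ffunP eq_supp.
have eq_col : col i A = col k A.
  apply/matrixP => j l; rewrite !mxE; have := eq_supp j; rewrite !ffunE.
  by case: (A_bin j i) => ->; case: (A_bin j k) => ->; rewrite ?eqxx ?oner_eq0.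
have spike (l : 'I_N) : one_sparse_with mu (mu *: delta_mx l (0 : 'I_1)).
  exists l; split; first by rewrite !mxE !eqxx mulr1.
  by move=> l' /negbTE l'_neq; rewrite !mxE l'_neq mulr0.
have := A_rec _ _ (spike i) (spike k).
rewrite -!scalemxAr -!colE eq_col => /(_ erefl) /matrixP /(_ i 0).
rewrite !mxE !eqxx /=; case: eqVneq => // _; rewrite mulr1 mulr0 => mu0.
by rewrite mu0 eqxx in mu_neq0.
Qed.

Lemma ln2_bounds (R : realType) : 0 < ln (2 : R) <= 1.
Proof.
rewrite ln_gt0 ?ltr1n //=.
by have := @le_ln1Dx R 1 ltac:(lra); rewrite (_ : 1 + 1 = 2 :> R).
Qed.

Lemma ln_log2 (R : realType) (x : R) : ln x = log2 x * ln 2.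
Proof. by rewrite /log2 divfK // gt_eqF; case/andP: (ln2_bounds R). Qed.

Lemma log2_ge2 (R : realType) (x : R) : 4 <= x -> 2 <= log2 x.
Proof.
move=> x_ge4; have /andP[ln2_gt0 _] := ln2_bounds R.
have ln4 : ln (4 : R) = 2 * ln 2.
  by rewrite (_ : 4 = 2 * 2 :> R) ?lnM ?posrE //; [ring | ring].
by rewrite -(ler_pM2r ln2_gt0) -ln_log2 -ln4 ler_ln ?posrE //; lra.
Qed.

Lemma measurements_le (R : realType) (x : R) (M : nat) :
  (M : int) = Num.ceil x -> M%:R <= x + 1.
Proof.
by move=> M_ceil; have := ceilB1_lt x; rewrite -M_ceil rmorphB /= pmulrn; lra.
Qed.

Lemma l0_cost_upper (R : realType) (T : R) (N M : nat) (A : 'M[R]_(M, N)) :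
  1 <= T -> (4 <= N)%N -> M%:R <= T * log2 (N%:R : R) + 1 ->
  (l0_cost A)%:R <= (T + 1) * (N%:R * log2 (N%:R : R)).
Proof.
move=> T_ge1 N_ge4 M_le; have L_ge2 : 2 <= log2 (N%:R : R).
  by apply: log2_ge2; rewrite (ler_nat R 4 N).
have N_ge0 : (0 : R) <= N%:R by [].
have : (l0_cost A)%:R <= M%:R * N%:R :> R by rewrite -natrM ler_nat l0_cost_le_mul.
have := ler_wpM2r N_ge0 M_le.
have : 0 <= (log2 (N%:R : R) - 1) * N%:R by apply: mulr_ge0 => //; lra.
nra.
Qed.

Lemma l0_cost_lower (R : realType) (T mu : R) : 1 <= T -> mu != 0 ->
  exists2 C1 : R, 0 < C1 &
  forall (N M : nat) (A : 'M[R]_(M, N)),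
    (4 <= N)%N -> M%:R <= T * log2 (N%:R : R) + 1 ->
    binary_mx A -> recovers_one_sparse mu A ->
    C1 * (N%:R * log2 (N%:R : R)) <= (l0_cost A)%:R.
Proof.
move=> T_ge1 mu_neq0; have /andP[ln2_gt0 ln2_le1] := ln2_bounds R.
set q := ln 2 / (2 * T); set s := - ln q.
have q_gt0 : 0 < q by apply: divr_gt0 => //; lra.
have Tq : 2 * T * q = ln 2 by rewrite mulrC divfK //; lra.
have s_gt0 : 0 < s by rewrite oppr_gt0 ln_lt0 // q_gt0 /=; nra.
exists (ln 2 / (4 * s)); first by apply: divr_gt0 => //; lra.
move=> N M A N_ge4 M_le A_bin A_rec.
have N_gt0 : (0 < N)%N by apply: leq_trans N_ge4.
have L_ge2 : 2 <= log2 (N%:R : R) by apply: log2_ge2; rewrite (ler_nat R 4 N).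
have := mean_weight_lower_bound q_gt0 (support_col_inj mu_neq0 A_bin A_rec) N_gt0.
rewrite -l0_costE (ln_log2 N%:R) -/s; set a := _ / N%:R => mean_ge.
(* [M q <= (T log2 N + 1) q = (ln N) / 2 + q] and [q <= ln 2 / 2 <= (ln N) / 4] *)
have Mq_le : M%:R * q <= log2 N%:R * ln 2 / 2 + ln 2 / 2.
  have -> : log2 N%:R * ln 2 / 2 + ln 2 / 2 = (T * log2 N%:R + 1) * q + (T - 1) * q.
    by rewrite -Tq; field; lra.
  by have := ler_wpM2r (ltW q_gt0) M_le; nra.
have a_ge : ln 2 * log2 N%:R / 4 / s <= a by rewrite ler_pdivrMr //; nra.
have -> : (l0_cost A)%:R = a * N%:R by rewrite /a divfK // pnatr_eq0 -lt0n.
rewrite (_ : _ * (N%:R * _) = ln 2 * log2 N%:R / 4 / s * N%:R); last by field; lra.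
by rewrite ler_wpM2r.
Qed.

Theorem theorem1 (R : realType) (T : R) (hT : 1 <= T) (mu : R) (hmu : mu != 0) :
  exists C1 C2 : R, 0 < C1 /\ 0 < C2 /\
  exists N0 : nat, forall (N M : nat) (A : 'M[R]_(M, N)),
    (N0 <= N)%N ->
    (M : int) = Num.ceil (T * log2 (N%:R : R)) ->
    binary_mx A ->
    recovers_one_sparse mu A ->
    C1 * (N%:R * log2 (N%:R : R)) <= (l0_cost A)%:R /\
    (l0_cost A)%:R <= C2 * (N%:R * log2 (N%:R : R)).
Proof.
have [C1 C1_gt0 lower] := l0_cost_lower hT hmu.
exists C1, (T + 1); split=> //; split; first lra.
exists 4%N => N M A N_ge4 M_ceil A_bin A_rec.
have M_le := measurements_le M_ceil.
by split; [exact: lower | exact: (l0_cost_upper A hT)].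
Qed.
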